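(* Let $\Gamma$ be a connected directed graph of bounded degree and let $\nu$ be a quasi-cocycle on $\Gamma$ with constants $\Delta>0$, $\eta>0$. Suppose that for every arrow of $\Gamma$ starting at a vertex $v$ and ending at a vertex $u$ we have $\nu(v,u)>2\eta$. Then every (finite or infinite) directed path in $\Gamma$ is a $((\Delta+\eta)/\eta,1)$-quasi-geodesic.
   Context: Distances between vertices of a connected graph are combinatorial (the least number of edges in a connecting path). A function $\nu$ on pairs of vertices of a bounded degree graph $\Gamma$ is a quasi-cocycle with constants $\Delta>0$, $\eta>0$ if $|\nu(v_1,v_2)|\le\Delta$ for all adjacent vertices $v_1,v_2$ and $\nu(v_1,v_2)+\nu(v_2,v_3)-\eta\le\nu(v_1,v_3)\le\nu(v_1,v_2)+\nu(v_2,v_3)+\eta$ for all vertices $v_1,v_2,v_3$. A sequence of points $t_0,t_1,\ldots$ (finite or infinite) of a metric space is a $(\Lambda,\Delta')$-quasi-geodesic if $|t_i-t_{i+1}|\le\Delta'$ and $|i-j|\le\Lambda\cdot|t_i-t_j|$ for all indices $i,j$. A directed path is a sequence of vertices $x_1,x_2,\ldots$ such that each $(x_i,x_{i+1})$ is an arrow. *)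

From Stdlib Require Import Reals Lra Lia List ClassicalEpsilon.
Open Scope R_scope.

Definition adj {V : Type} (arr : V -> V -> Prop) (u v : V) : Prop :=
  arr u v \/ arr v u.

Inductive walk {V : Type} (arr : V -> V -> Prop) : V -> V -> nat -> Prop :=
| walk_nil : forall v, walk arr v v 0
| walk_cons : forall u w v n, adj arr u w -> walk arr w v n -> walk arr u v (S n).

Definition connected {V : Type} (arr : V -> V -> Prop) : Prop :=
  forall u v : V, exists n, walk arr u v n.

Definition bounded_degree {V : Type} (arr : V -> V -> Prop) : Prop :=
  exists D : nat, forall v : V,
    exists l : list V, (length l <= D)%nat /\ forall u, adj arr v u -> In u l.

Definition is_dist {V : Type} (arr : V -> V -> Prop) (u v : V) (n : nat) : Prop :=
  walk arr u v n /\ forall m, walk arr u v m -> (n <= m)%nat.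

(* The combinatorial distance (meaningful when the graph is connected). *)
Definition gdist {V : Type} (arr : V -> V -> Prop) (u v : V) : nat :=
  epsilon (inhabits 0%nat) (fun n => is_dist arr u v n).

Definition quasi_cocycle {V : Type} (arr : V -> V -> Prop) (nu : V -> V -> R)
    (Delta eta : R) : Prop :=
  (forall v1 v2, adj arr v1 v2 -> Rabs (nu v1 v2) <= Delta) /\
  (forall v1 v2 v3,
      nu v1 v2 + nu v2 v3 - eta <= nu v1 v3 /\
      nu v1 v3 <= nu v1 v2 + nu v2 v3 + eta).

(* A (finite or infinite) sequence: t : nat -> V with index domain
   {0,...,N} if len = Some N, and all of nat if len = None. *)
Definition in_dom (len : option nat) (i : nat) : Prop :=
  match len with
  | None => True
  | Some N => (i <= N)%nat
  end.

Definition directed_path {V : Type} (arr : V -> V -> Prop)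
    (t : nat -> V) (len : option nat) : Prop :=
  forall i, in_dom len (S i) -> arr (t i) (t (S i)).

Definition quasi_geodesic {V : Type} (arr : V -> V -> Prop)
    (Lambda Delta' : R) (t : nat -> V) (len : option nat) : Prop :=
  (forall i, in_dom len (S i) -> INR (gdist arr (t i) (t (S i))) <= Delta') /\
  (forall i j, in_dom len i -> in_dom len j ->
     Rabs (INR i - INR j) <= Lambda * INR (gdist arr (t i) (t j))).

(* Along a directed path the quasi-cocycle grows by at least [eta] per arrow:
   by the lower quasi-triangle inequality and [nu > 2 eta] on arrows,
   [nu (t i) (t j) >= (j - i + 1) eta].  Along any edge path of length [n] it
   grows by at most [Delta + eta] per edge, so [nu u v <= n (Delta + eta) + eta].
   Comparing the two bounds on a geodesic from [t i] to [t j] gives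
   [(j - i) eta <= (Delta + eta) d(t i, t j)]. *)
From Stdlib Require Import Reals Lra Lia Classical ClassicalEpsilon.
Open Scope R_scope.

Section Walks.

Variables (V : Type) (arr : V -> V -> Prop).

Lemma adj_sym u v : adj arr u v -> adj arr v u.
Proof. unfold adj; tauto. Qed.

Lemma walk_snoc u v w n : walk arr u v n -> adj arr v w -> walk arr u w (S n).
Proof.
  induction 1 as [v | u x v n Hux _ IH]; intros Hvw.
  - apply walk_cons with w; [exact Hvw | constructor].
  - apply walk_cons with x; auto.
Qed.

Lemma walk_rev u v n : walk arr u v n -> walk arr v u n.
Proof.
  induction 1 as [v | u x v n Hux _ IH].
  - constructor.
  - apply walk_snoc with x; [exact IH | exact (adj_sym _ _ Hux)].
Qed.

Lemma walk_arr u v : arr u v -> walk arr u v 1.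
Proof. intros Huv. apply walk_cons with v; [left; exact Huv | constructor]. Qed.

Lemma is_dist_exists u v n : walk arr u v n -> exists m, is_dist arr u v m.
Proof.
  induction n as [n IH] using (well_founded_induction Wf_nat.lt_wf); intros Hw.
  destruct (classic (exists m, (m < n)%nat /\ walk arr u v m))
    as [[m [Hmn Hm]] | Hnone].
  - exact (IH m Hmn Hm).
  - exists n. split; [exact Hw |].
    intros m Hm. destruct (Nat.le_gt_cases n m) as [Hnm | Hmn]; [exact Hnm |].
    exfalso. apply Hnone. now exists m.
Qed.

Lemma gdist_spec u v n : walk arr u v n -> is_dist arr u v (gdist arr u v).
Proof.
  intros Hw. unfold gdist. apply epsilon_spec. exact (is_dist_exists _ _ _ Hw).
Qed.

Lemma gdist_walk u v n : walk arr u v n -> walk arr u v (gdist arr u v).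
Proof. intros Hw. exact (proj1 (gdist_spec _ _ _ Hw)). Qed.

Lemma gdist_le_walk u v n : walk arr u v n -> (gdist arr u v <= n)%nat.
Proof. intros Hw. exact (proj2 (gdist_spec _ _ _ Hw) n Hw). Qed.

Lemma gdist_sym u v : connected arr -> gdist arr u v = gdist arr v u.
Proof.
  intros Hconn. destruct (Hconn u v) as [n Hw].
  pose proof (gdist_walk _ _ _ Hw) as Huv.
  pose proof (gdist_walk _ _ _ (walk_rev _ _ _ Hw)) as Hvu.
  apply Nat.le_antisymm; apply gdist_le_walk; apply walk_rev; assumption.
Qed.

End Walks.

Section QuasiCocycle.

Variables (V : Type) (arr : V -> V -> Prop) (nu : V -> V -> R) (Delta eta : R).
Hypothesis Hnu : quasi_cocycle arr nu Delta eta.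

Lemma quasi_cocycle_walk_le u v n :
  walk arr u v n -> nu u v <= INR n * (Delta + eta) + eta.
Proof.
  destruct Hnu as [Hbound Htri].
  induction 1 as [v | u w v n Huw _ IH].
  - destruct (Htri v v v). simpl. lra.
  - destruct (Htri u w v). pose proof (Rle_abs (nu u w)).
    pose proof (Hbound _ _ Huw). rewrite S_INR. lra.
Qed.

Variables (t : nat -> V) (len : option nat).
Hypothesis Hpos : forall v u, arr v u -> nu v u > 2 * eta.
Hypothesis Hpath : directed_path arr t len.

Lemma in_dom_le a b : in_dom len a -> (b <= a)%nat -> in_dom len b.
Proof. destruct len; simpl; auto; lia. Qed.

Lemma quasi_cocycle_directed_path_ge i k :
  in_dom len (i + S k) -> INR (S k) * eta + eta <= nu (t i) (t (i + S k)%nat).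
Proof.
  destruct Hnu as [_ Htri].
  induction k as [| k IH]; intros Hdom.
  - rewrite Nat.add_1_r in *. pose proof (Hpos _ _ (Hpath i Hdom)). simpl. lra.
  - replace (i + S (S k))%nat with (S (i + S k)) in * by lia.
    pose proof (IH (in_dom_le _ _ Hdom (Nat.le_succ_diag_r _))).
    pose proof (Hpos _ _ (Hpath _ Hdom)).
    destruct (Htri (t i) (t (i + S k)%nat) (t (S (i + S k)))).
    rewrite (S_INR (S k)). lra.
Qed.

Lemma directed_path_index_gap i j n :
  (i < j)%nat -> in_dom len j -> walk arr (t i) (t j) n ->
  (INR j - INR i) * eta <= INR n * (Delta + eta).
Proof.
  intros Hij Hdom Hw.
  replace j with (i + S (j - S i))%nat in * by lia.
  pose proof (quasi_cocycle_directed_path_ge i (j - S i) Hdom).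
  pose proof (quasi_cocycle_walk_le _ _ _ Hw).
  rewrite plus_INR. lra.
Qed.

End QuasiCocycle.

Theorem lemma1p2p14 (V : Type) (arr : V -> V -> Prop) (nu : V -> V -> R)
    (Delta eta : R) :
  connected arr ->
  bounded_degree arr ->
  0 < Delta -> 0 < eta ->
  quasi_cocycle arr nu Delta eta ->
  (forall v u, arr v u -> nu v u > 2 * eta) ->
  forall (t : nat -> V) (len : option nat),
    directed_path arr t len ->
    quasi_geodesic arr ((Delta + eta) / eta) 1 t len.
Proof.
  intros Hconn _ HDelta Heta Hnu Hpos t len Hpath. split.
  - intros i Hi.
    pose proof (gdist_le_walk _ _ _ _ _ (walk_arr _ _ _ _ (Hpath i Hi))) as Hle.
    apply le_INR in Hle. simpl in Hle. exact Hle.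
  - assert (Hgap : forall i j, (i < j)%nat -> in_dom len j ->
              INR j - INR i <= (Delta + eta) / eta * INR (gdist arr (t i) (t j))).
    { intros i j Hij Hj. destruct (Hconn (t i) (t j)) as [n Hw].
      pose proof (directed_path_index_gap _ _ _ _ _ Hnu _ _ Hpos Hpath
                    _ _ _ Hij Hj (gdist_walk _ _ _ _ _ Hw)).
      unfold Rdiv. rewrite Rmult_assoc, (Rmult_comm (/ eta)), <- Rmult_assoc.
      apply Rmult_le_reg_r with eta; [exact Heta |].
      rewrite Rmult_assoc, Rinv_l by lra. lra. }
    intros i j Hi Hj.
    assert (0 <= (Delta + eta) / eta * INR (gdist arr (t i) (t j))).
    { apply Rmult_le_pos; [apply Rlt_le, Rdiv_lt_0_compat; lra | apply pos_INR]. }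
    destruct (Nat.lt_total i j) as [Hij | [-> | Hij]].
    + pose proof (Hgap i j Hij Hj). apply lt_INR in Hij.
      rewrite Rabs_left by lra. lra.
    + rewrite Rminus_diag, Rabs_R0. lra.
    + pose proof (Hgap j i Hij Hi). rewrite (gdist_sym _ _ (t i)) in * by exact Hconn.
      apply lt_INR in Hij. rewrite Rabs_right by lra. lra.
Qed.
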